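(* Let $(R,\mathfrak{m})$ be a one-dimensional Cohen–Macaulay local ring. If $I$ is a trace ideal of $R$, then its integral closure $\bar I$ is also a trace ideal.
   Context: For an $R$-module $N$, $\operatorname{tr}(N)$ is the image of $N\otimes_R\operatorname{Hom}_R(N,R)\to R$, $n\otimes\alpha\mapsto\alpha(n)$; an ideal $I$ is a trace ideal if $I=\operatorname{tr}(N)$ for some $R$-module $N$ (equivalently $\operatorname{tr}(I)=I$). $\bar I$ denotes the integral closure of the ideal $I$. *)

From Stdlib Require List.
From HB Require Import structures.
From mathcomp Require Import all_boot all_order all_algebra.
Set Implicit Arguments. Unset Strict Implicit. Unset Printing Implicit Defensive.
Import Order.TTheory GRing.Theory Num.Theory.
Local Open Scope ring_scope.

Section CommAlg.
Variable R : comNzRingType.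

Definition same_set (A B : R -> Prop) : Prop := forall x, A x <-> B x.
Definition subset (A B : R -> Prop) : Prop := forall x, A x -> B x.

Definition is_ideal (I : R -> Prop) : Prop :=
  [/\ I 0, (forall x y, I x -> I y -> I (x + y)) & (forall r x, I x -> I (r * x))].

Definition is_prime (P : R -> Prop) : Prop :=
  [/\ is_ideal P, ~ P 1 & forall x y, P (x * y) -> P x \/ P y].

Definition is_maximal (M : R -> Prop) : Prop :=
  [/\ is_ideal M, ~ M 1 &
      forall J, is_ideal J -> ~ J 1 -> subset M J -> same_set M J].

Definition ideal_gen (s : seq R) (x : R) : Prop :=
  exists c : nat -> R, x = \sum_(i < size s) c i * s`_i.

Definition noetherian : Prop :=
  forall I, is_ideal I -> exists s : seq R, same_set I (ideal_gen s).

Definition local_with_max (m : R -> Prop) : Prop :=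
  is_maximal m /\ forall M, is_maximal M -> same_set M m.

Definition prime_chain (n : nat) (P : nat -> R -> Prop) : Prop :=
  (forall i, (i <= n)%N -> is_prime (P i)) /\
  (forall i, (i < n)%N -> subset (P i) (P i.+1) /\ ~ subset (P i.+1) (P i)).

Definition krull_dim (d : nat) : Prop :=
  (exists P, prime_chain d P) /\ ~ (exists P, prime_chain d.+1 P).

Definition regular_seq (m : R -> Prop) (s : seq R) : Prop :=
  (forall i, (i < size s)%N -> m s`_i) /\
  (forall i, (i < size s)%N -> forall r,
      ideal_gen (take i s) (r * s`_i) -> ideal_gen (take i s) r).

Definition depth_ge (m : R -> Prop) (d : nat) : Prop :=
  exists s, size s = d /\ regular_seq m s.

(* (R, m) is a Noetherian Cohen-Macaulay local ring of Krull dimension d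
   (depth R = dim R; since depth <= dim always, depth >= d suffices). *)
Definition CM_local_ring (m : R -> Prop) (d : nat) : Prop :=
  [/\ noetherian, local_with_max m, krull_dim d & depth_ge m d].

Definition is_hom (N : lmodType R) (f : N -> R) : Prop :=
  forall (r : R) (x y : N), f (r *: x + y) = r * f x + f y.

(* tr(N): image of N (x) Hom_R(N,R) -> R, i.e. finite sums of alpha_i(n_i). *)
Definition trace (N : lmodType R) (x : R) : Prop :=
  exists s : seq (N * (N -> R)),
    (forall p, List.In p s -> is_hom p.2) /\ x = \sum_(p <- s) p.2 p.1.

Definition is_trace_ideal (I : R -> Prop) : Prop :=
  exists N : lmodType R, same_set I (trace N).

Definition ideal_mul (I J : R -> Prop) (x : R) : Prop :=
  exists s : seq (R * R),
    (forall p, List.In p s -> I p.1 /\ J p.2) /\ x = \sum_(p <- s) p.1 * p.2.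

Fixpoint ideal_pow (I : R -> Prop) (n : nat) : R -> Prop :=
  match n with
  | 0 => fun _ => True
  | n'.+1 => ideal_mul I (ideal_pow I n')
  end.

Definition int_closure (I : R -> Prop) (x : R) : Prop :=
  exists (n : nat) (a : nat -> R), (0 < n)%N /\
    (forall i, (1 <= i <= n)%N -> ideal_pow I i (a i)) /\
    x ^+ n + \sum_(1 <= i < n.+1) a i * x ^+ (n - i) = 0.

End CommAlg.

(* Take the module Ī itself.  The inclusion Ī -> R gives
   Ī ⊆ tr(Ī); conversely we show f(Ī) ⊆ Ī for every R-linear f : Ī -> R.
   Such an f acts as multiplication by the "fraction" φ = f(b)/b, and since I is
   a trace ideal f(I) ⊆ I, so φ^i I^i ⊆ I^i.  Multiplying an equation
   u^d + a_1 u^(d-1) + ... + a_d = 0 (a_i ∈ I^i) by φ^d gives an equation of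
   integral dependence for f(u); as φ is not an element of R, it only holds up to
   an E ∈ I with b^d E = 0 for all b ∈ I, so E^(d+1) = 0 and f(u) is a root of
   the (d+1)-st power of the twisted equation.  That Ī is an ideal at all comes
   from: x ∈ Ī iff xt is integral over the Rees algebra R[It]. *)

From Stdlib Require List.
From HB Require Import structures.
From mathcomp Require Import all_boot all_order all_algebra.
From mathcomp Require Import zify boolp.
Set Implicit Arguments. Unset Strict Implicit. Unset Printing Implicit Defensive.
Import GRing.Theory.
Local Open Scope ring_scope.

Lemma big_In_ind (R : nmodType) (K : R -> Prop) (T : Type) (s : seq T) (F : T -> R) :
  K 0 -> (forall x y, K x -> K y -> K (x + y)) ->
  (forall t, List.In t s -> K (F t)) -> K (\sum_(t <- s) F t).
Proof.
move=> K0 KD; elim: s => [|t s IH] KF; first by rewrite big_nil.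
by rewrite big_cons; apply: KD; [apply: KF; left | apply: IH => u Hu; apply: KF; right].
Qed.

Section IdealPow.
Variable R : comNzRingType.
Implicit Types I J K : R -> Prop.

Lemma ideal_sum J (T : Type) (s : seq T) (F : T -> R) :
  is_ideal J -> (forall t, List.In t s -> J (F t)) -> J (\sum_(t <- s) F t).
Proof. by case=> J0 JD _; apply: big_In_ind. Qed.

Lemma idealB J x y : is_ideal J -> J x -> J y -> J (x - y).
Proof. by case=> _ JD JM Jx Jy; rewrite -mulN1r; apply/JD/JM. Qed.

Lemma ideal_mul_ideal J K : is_ideal K -> is_ideal (ideal_mul J K).
Proof.
case=> _ _ KM; split.
- by exists [::]; rewrite big_nil.
- move=> _ _ [s [Hs ->]] [t [Ht ->]]; exists (s ++ t); rewrite big_cat; split => // p.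
  by case/(@List.in_app_or _ s t); [apply: Hs | apply: Ht].
- move=> r _ [s [Hs ->]]; exists [seq (p.1, r * p.2) | p <- s]; split.
  + by move=> _ /List.in_map_iff [p [<- /Hs [J1 K2]]]; split => //; apply: KM.
  + by rewrite big_map mulr_sumr; apply: eq_bigr => p _; rewrite mulrCA.
Qed.

Lemma ideal_pow_ideal I k : is_ideal (ideal_pow I k).
Proof. by elim: k => [|k IH] /=; [split | apply: ideal_mul_ideal]. Qed.

Lemma ideal_pow0 I k : ideal_pow I k 0.
Proof. by case: (ideal_pow_ideal I k). Qed.

Lemma ideal_pow_mul I i j x y :
  ideal_pow I i x -> ideal_pow I j y -> ideal_pow I (i + j) (x * y).
Proof.
elim: i x => [|i IH] x /= Hx Hy; first by case: (ideal_pow_ideal I j) => _ _; apply.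
case: Hx => s [Hs ->]; exists [seq (p.1, p.2 * y) | p <- s]; split.
  by move=> _ /List.in_map_iff [p [<- /Hs [I1 I2]]]; split => //; apply: IH.
by rewrite big_map mulr_suml; apply: eq_bigr => p _; rewrite mulrA.
Qed.

Lemma ideal_pow1 I x : I x -> ideal_pow I 1 x.
Proof.
by move=> Ix; exists [:: (x, 1)]; split; [move=> p [<-|[]] | rewrite big_seq1 mulr1].
Qed.

Lemma ideal_pow_sub I k x : is_ideal I -> (0 < k)%N -> ideal_pow I k x -> I x.
Proof.
case: k => // k HI _ [s [Hs ->]]; apply: ideal_sum => // p /Hs [Ip _].
by case: HI => _ _; rewrite mulrC; apply.
Qed.

End IdealPow.

Section IntegralDependence.
Variables (R : comNzRingType) (I : R -> Prop).

(* [q] encodes x^d + a_1 x^(d-1) + ... + a_d with a_i ∈ I^i, as q`_l = a_(d-l). *)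
Definition int_dep_poly (d : nat) (q : {poly R}) :=
  [/\ size q = d.+1, q`_d = 1 & forall l, ideal_pow I (d - l) q`_l].

Lemma int_dep_polyE d q : int_dep_poly d q ->
  forall x, q.[x] = x ^+ d + \sum_(l < d) q`_l * x ^+ l.
Proof.
by case=> Sq qd _ x; rewrite horner_coef Sq big_ord_recr /= qd mul1r addrC.
Qed.

Lemma int_dep_poly_mk d (c : nat -> R) :
  c d = 1 -> (forall l, (l < d)%N -> ideal_pow I (d - l) (c l)) ->
  int_dep_poly d (\poly_(l < d.+1) c l).
Proof.
move=> cd Hc; split; first by rewrite size_poly_eq // cd oner_neq0.
- by rewrite coef_poly ltnSn.
- move=> l; rewrite coef_poly; case: ltnP => [|_]; last exact: ideal_pow0.
  by rewrite ltnS leq_eqVlt => /predU1P [->|/Hc //]; rewrite subnn.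
Qed.

Lemma sum_rev_ord d (F : nat -> R) :
  \sum_(1 <= i < d.+1) F (d - i)%N = \sum_(l < d) F l.
Proof.
rewrite big_add1 /= -(big_mkord xpredT) [RHS](big_nat_rev _ _ 0 d).
by apply: eq_big_nat => i /andP [_ Hi]; congr F; lia.
Qed.

Lemma int_closureP x :
  int_closure I x <-> exists d q, [/\ (0 < d)%N, int_dep_poly d q & root q x].
Proof.
split.
- case=> d [a [d_gt0 [Ha Hx]]].
  pose q := \poly_(l < d.+1) (if l == d then 1 else a (d - l)%N).
  have Hq : int_dep_poly d q.
    apply: int_dep_poly_mk => [|l ltld]; first by rewrite eqxx.
    rewrite ltn_eqF //; apply: Ha; lia.
  exists d, q; split => //; apply/rootP; rewrite (int_dep_polyE Hq) -[RHS]Hx.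
  rewrite -(sum_rev_ord d (fun l => q`_l * x ^+ l)); congr (_ + _).
  apply: eq_big_nat => i /andP [i_gt0 led]; rewrite coef_poly.
  have -> : (d - i < d.+1)%N by lia.
  by rewrite (_ : (d - i == d)%N = false) ?subKn //; apply/eqP; lia.
- case=> d [q [d_gt0 Hq /rootP qx0]]; exists d, (fun i => q`_(d - i)); split => //.
  split; first by case: Hq => _ _ Hl i /andP [_ le_id]; rewrite -{1}(subKn le_id).
  by rewrite (sum_rev_ord d (fun l => q`_l * x ^+ l)) -(int_dep_polyE Hq).
Qed.

End IntegralDependence.

Section ReesAlgebra.
Variables (R : comNzRingType) (I : R -> Prop).

(* The Rees algebra R[It] as the subring of R[t] of the polynomials whose
   t^k-coefficient lies in I^k. *)
Definition rees_mem : {pred {poly R}} :=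
  fun p : {poly R} => `[< forall k, ideal_pow I k p`_k >].

Lemma rees_memP (p : {poly R}) :
  reflect (forall k, ideal_pow I k p`_k) (p \in rees_mem).
Proof. exact: asboolP. Qed.

Lemma rees_subring : subring_closed rees_mem.
Proof.
split.
- by apply/rees_memP => -[|k]; rewrite coef1 //; apply: ideal_pow0.
- move=> p q /rees_memP Hp /rees_memP Hq; apply/rees_memP => k.
  by rewrite coefB; apply: idealB => //; apply: ideal_pow_ideal.
- move=> p q /rees_memP Hp /rees_memP Hq; apply/rees_memP => k.
  rewrite coefM; apply: big_In_ind => [|x y|j _]; first exact: ideal_pow0.
    by case: (ideal_pow_ideal I k) => _ + _; apply.
  have le_jk : (j <= k)%N by rewrite -ltnS.
  by have := ideal_pow_mul (Hp j) (Hq (k - j)%N); rewrite subnKC.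
Qed.

Definition rees_algebra := {p : {poly R} | p \in rees_mem}.
HB.instance Definition _ := [isSub for (@proj1_sig _ _ : rees_algebra -> {poly R})].
HB.instance Definition _ := [Choice of rees_algebra by <:].
HB.instance Definition _ :=
  GRing.SubChoice_isSubComNzRing.Build _ _ rees_algebra rees_subring.

Lemma rees_monomial c k : ideal_pow I k c -> c%:P * 'X^k \in rees_mem.
Proof.
move=> Hc; apply/rees_memP => l; rewrite coefCM coefXn.
by case: eqP => [->|_]; rewrite ?mulr1 // mulr0; apply: ideal_pow0.
Qed.

Lemma int_dep_poly_lift d q : int_dep_poly I d q ->
  exists2 Q : {poly rees_algebra}, Q \is monic &
    forall x, (map_poly val Q).[x%:P * 'X] = q.[x]%:P * 'X^d.
Proof.
case=> Sq qd Hq.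
pose Q : {poly rees_algebra} := \poly_(l < d.+1) insubd 0 ((q`_l)%:P * 'X^(d - l)).
have valQ : map_poly val Q = \poly_(l < d.+1) ((q`_l)%:P * 'X^(d - l)).
  apply/polyP => l; rewrite coef_map !coef_poly.
  by case: ifP => _; [apply: insubdK; apply: rees_monomial | apply: raddf0].
have Qd : insubd 0 ((q`_d)%:P * 'X^(d - d)) = 1 :> rees_algebra.
  by apply: val_inj; rewrite insubdK ?rees_monomial // qd subnn expr0 mulr1.
exists Q => [|x]; first by apply/monicP; rewrite lead_coef_poly //= Qd oner_neq0.
rewrite valQ horner_poly horner_coef Sq rmorph_sum mulr_suml; apply: eq_bigr => l _.
by rewrite rmorphM /= exprMn -polyC_exp mulrACA -exprD subnK // -ltnS.
Qed.

End ReesAlgebra.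

Section ClosureViaRees.
Variables (R : comNzRingType) (I : R -> Prop).
Local Notation integral := (integralOver (val : rees_algebra I -> {poly R})).

Lemma rees_polyC r : r%:P \in rees_mem I.
Proof. by have := @rees_monomial R I r 0; rewrite expr0 mulr1; apply. Qed.

Lemma rees_integral_nil_root d q w n : int_dep_poly I d q -> q.[w] ^+ n = 0 ->
  integral (w%:P * 'X).
Proof.
case/int_dep_poly_lift=> Q Qmonic HQ qw0; exists (Q ^+ n); first exact: monic_exp.
by rewrite /root rmorphXn horner_exp HQ exprMn -polyC_exp qw0 mul0r.
Qed.

Lemma int_closure_integral x : int_closure I x <-> integral (x%:P * 'X).
Proof.
split=> [/int_closureP [d [q [_ Hq /rootP qx0]]]|[P /monicP Pmonic /rootP Px0]].
  by apply: (rees_integral_nil_root (n := 1) Hq); rewrite expr1.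
pose n := (size P).-1; pose q := \poly_(l < n.+1) (val P`_l)`_(n - l).
have Hq : int_dep_poly I n q.
  apply: int_dep_poly_mk => [|l _]; last exact/rees_memP/valP.
  by rewrite subnn /n -lead_coefE Pmonic rmorph1 coef1.
have qx0 : q.[x] = 0.
  have sizeP : size (map_poly val P) = n.+1.
    rewrite size_map_poly_id0 ?Pmonic ?oner_neq0 // prednK // lt0n size_poly_eq0.
    by apply: contra_eq_neq Pmonic => ->; rewrite lead_coef0 eq_sym oner_neq0.
  have : ((map_poly val P).[x%:P * 'X])`_n = 0 by rewrite Px0 coef0.
  rewrite horner_coef sizeP coef_sum => E.
  rewrite horner_poly -[RHS]E; apply: eq_bigr => l _.
  rewrite coef_map exprMn -polyC_exp mulrA coefMXn coefMC.
  by rewrite ltnNge -ltnS ltn_ord.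
apply/int_closureP; exists n, q; split => //; last exact/rootP.
rewrite lt0n; apply: contra_eq_neq qx0 => n0.
by rewrite (int_dep_polyE Hq) n0 big_ord0 addr0 expr0 oner_neq0.
Qed.

Lemma int_closure_of_mem b : I b -> int_closure I b.
Proof.
move=> Ib; have := rees_monomial (ideal_pow1 Ib); rewrite expr1 => reesbX.
apply/int_closure_integral; rewrite -(insubdK (0 : rees_algebra I) reesbX).
exact: integral_id.
Qed.

Lemma int_closureD x y :
  int_closure I x -> int_closure I y -> int_closure I (x + y).
Proof. by rewrite !int_closure_integral polyCD mulrDl; apply: integral_add. Qed.

Lemma int_closureM r x : int_closure I x -> int_closure I (r * x).
Proof.
rewrite !int_closure_integral polyCM -mulrA; apply: integral_mul.
by rewrite -(insubdK (0 : rees_algebra I) (rees_polyC r)); apply: integral_id.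
Qed.

Lemma int_closure_ideal : is_ideal (int_closure I).
Proof.
split; [|exact: int_closureD|exact: int_closureM].
by apply/int_closure_integral; rewrite mul0r; apply: integral0.
Qed.

End ClosureViaRees.

Section IntegralClosureStable.
Variables (R : comNzRingType) (I : R -> Prop) (psi : R -> R).
Hypothesis I_ideal : is_ideal I.

Lemma int_dep_horner_sub d q x : int_dep_poly I d q -> I (q.[x] - x ^+ d).
Proof.
move=> Hq; rewrite (int_dep_polyE Hq) addrC addKr.
case: I_ideal => I0 ID IM; apply: big_ind => // l _; rewrite mulrC; apply: IM.
by case: Hq => _ _ /(_ l) /ideal_pow_sub; apply; rewrite // subn_gt0.
Qed.

Hypotheses (psiZ : forall r x, int_closure I x -> psi (r * x) = r * psi x)
  (psi_mem : forall b, I b -> I (psi b)).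

Lemma psi_comm x y : int_closure I x -> int_closure I y -> x * psi y = y * psi x.
Proof. by move=> Hx Hy; rewrite -psiZ // -psiZ // mulrC. Qed.

(* [a'] stands for φ^k a, where φ = psi b / b does not depend on b by [psi_comm]. *)
Lemma psi_twist k a : ideal_pow I k a ->
  exists a', ideal_pow I k a' /\ forall b, I b -> b ^+ k * a' = psi b ^+ k * a.
Proof.
elim: k a => [|k IHk] a; first by exists a; split => // b _; rewrite !expr0.
pose twistable a := exists a',
  ideal_pow I k.+1 a' /\ forall b, I b -> b ^+ k.+1 * a' = psi b ^+ k.+1 * a.
case=> s [Hs ->]; apply: (@big_In_ind _ twistable) =>
  [|x y [x' [Hx' Ex]] [y' [Hy' Ey]]|p].
- by exists 0; split => [|b _]; rewrite ?mulr0 //; apply: ideal_pow0.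
- exists (x' + y'); split => [|b Ib]; last by rewrite !mulrDr Ex ?Ey.
  by case: (ideal_pow_ideal I k.+1) => _ + _; apply.
- case/Hs=> Ip1 /IHk [a' [Ha' Ea']]; exists (psi p.1 * a'); split => [|b Ib].
    by apply: (ideal_pow_mul (i := 1)) => //; apply/ideal_pow1/psi_mem.
  have Eb : b * psi p.1 = p.1 * psi b by apply: psi_comm; apply: int_closure_of_mem.
  by rewrite !exprS mulrACA Eb Ea' // [p.1 * _]mulrC mulrACA.
Qed.

Lemma psi_pow_mem x d : int_closure I x -> I (x ^+ d) -> I (psi x ^+ d).
Proof.
move=> Hx Ixd; have Ik k : (k <= d)%N -> I (x ^+ (d - k) * psi x ^+ k).
  elim: k => [|k IHk] ltkd; first by rewrite subn0 mulr1.
  have -> : x ^+ (d - k.+1) * psi x ^+ k.+1 = psi (x ^+ (d - k) * psi x ^+ k).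
    rewrite -(subnSK ltkd) [x ^+ _.+1]exprS [psi x ^+ _]exprSr [x * _]mulrC mulrAC.
    by rewrite psiZ // mulrA.
  by apply/psi_mem/IHk/ltnW.
by have := Ik d (leqnn d); rewrite subnn mul1r.
Qed.

Lemma twist_horner d q (c : nat -> R) u b : int_dep_poly I d q ->
    (forall l, (l <= d)%N -> b ^+ (d - l) * c l = psi b ^+ (d - l) * q`_l) ->
    int_closure I u -> I b ->
  b ^+ d * (\poly_(l < d.+1) c l).[psi u] = psi b ^+ d * q.[u].
Proof.
case=> Sq _ _ Hc Hu Ib; rewrite horner_poly horner_coef Sq !mulr_sumr.
apply: eq_bigr => l _; have le_ld : (l <= d)%N by rewrite -ltnS.
have split_pow (z : R) : z ^+ d = z ^+ (d - l) * z ^+ l by rewrite -exprD subnK.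
rewrite split_pow (split_pow (psi b)) mulrACA -exprMn Hc //.
by rewrite (psi_comm (int_closure_of_mem Ib)) // exprMn [u ^+ l * _]mulrC mulrACA.
Qed.

Lemma int_closure_stable u : int_closure I u -> int_closure I (psi u).
Proof.
move=> Hu; have /int_closureP [d [q [_ Hq /rootP qu0]]] := Hu.
have I0 : I 0 by case: I_ideal.
have Iud : I (u ^+ d).
  by have := idealB I_ideal I0 (int_dep_horner_sub u Hq); rewrite qu0 !sub0r opprK.
have [_ _ Hql] := Hq; have [c Hc] := choice (fun l => psi_twist (Hql l)).
pose q' := \poly_(l < d.+1) c l.
have Hq' : int_dep_poly I d q'.
  apply: int_dep_poly_mk => [|l _]; last by case: (Hc l).
  case: (Hc d) => _ /(_ 0 I0).
  by rewrite subnn !expr0 !mul1r; case: Hq => _ ->.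
have IE : I q'.[psi u].
  rewrite -(subrK (psi u ^+ d) q'.[psi u]); case: I_ideal => _ ID _; apply: ID.
    exact: int_dep_horner_sub.
  exact: psi_pow_mem.
have E_nil : q'.[psi u] ^+ d.+1 = 0.
  rewrite exprSr (twist_horner Hq _ Hu IE) ?qu0 ?mulr0 // => l _.
  by case: (Hc l) => _ ->.
exact/int_closure_integral/(rees_integral_nil_root Hq' E_nil).
Qed.

End IntegralClosureStable.

Section Trace.
Variable R : comNzRingType.
Implicit Type N : lmodType R.

Lemma hom0 N (f : N -> R) : is_hom f -> f 0 = 0.
Proof.
by move=> Hf; have := Hf 1 0 0; rewrite scale1r mul1r addr0 -{1}[f 0]addr0 => /addrI/esym.
Qed.

Lemma homZ N (f : N -> R) r x : is_hom f -> f (r *: x) = r * f x.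
Proof. by move=> Hf; rewrite -[r *: x]addr0 Hf hom0 // addr0. Qed.

Lemma trace_ideal N : is_ideal (trace N).
Proof.
split.
- by exists [::]; rewrite big_nil.
- move=> _ _ [s [Hs ->]] [t [Ht ->]]; exists (s ++ t); rewrite big_cat; split => // p.
  by case/(@List.in_app_or _ s t); [apply: Hs | apply: Ht].
- move=> r _ [s [Hs ->]]; exists [seq (r *: p.1, p.2) | p <- s]; split.
  + by move=> _ /List.in_map_iff [p [<- /Hs]].
  + elim: s Hs => [|p s IH] Hs; first by rewrite !big_nil mulr0.
    rewrite /= !big_cons /= mulrDr homZ; last by apply: Hs; left.
    by rewrite IH // => q Hq; apply: Hs; right.
Qed.

Lemma trace_hom N (f : N -> R) x : is_hom f -> trace N (f x).
Proof. by move=> Hf; exists [:: (x, f)]; split; [move=> p [<-|[]] | rewrite big_seq1]. Qed.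

Lemma is_ideal_trace_ideal (I : R -> Prop) : is_trace_ideal I -> is_ideal I.
Proof.
case=> N IN; case: (trace_ideal N) => T0 TD TM.
by split=> [|x y /IN Tx /IN Ty|r x /IN Tx]; apply/IN; auto.
Qed.

Lemma trace_stable N (I : R -> Prop) (phi : R -> R) : same_set I (trace N) ->
    (forall r x y, I x -> I y -> phi (r * x + y) = r * phi x + phi y) ->
  forall b, I b -> I (phi b).
Proof.
move=> IN phi_lin b /IN [s [Hs ->]].
have [I0 ID _] : is_ideal I by apply: is_ideal_trace_ideal; exists N.
have Ihom (f : N -> R) x : is_hom f -> I (f x) by move=> Hf; apply/IN/trace_hom.
elim: s Hs => [|p s IH] Hs.
  rewrite big_nil; have := phi_lin (-1) 0 0 I0 I0.
  by rewrite mulr0 add0r mulN1r addNr => ->.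
have Hp := Hs p (or_introl erefl).
have Hs' q : List.In q s -> is_hom q.2 by move=> ?; apply: Hs; right.
have Is : I (\sum_(q <- s) q.2 q.1) by apply/IN; exists s.
have Ip : I (p.2 p.1) by apply: Ihom.
rewrite big_cons -[p.2 p.1]mul1r phi_lin // mul1r; apply: ID; last exact: IH Hs'.
apply: (Ihom (phi \o p.2)) => r x y /=.
by rewrite Hp phi_lin //; apply: Ihom.
Qed.

End Trace.

Section ClosureModule.
Variables (R : comNzRingType) (I : R -> Prop).

Definition int_closure_mem : {pred R^o} := fun x => `[< int_closure I x >].

Lemma int_closure_submod : subsemimod_closed int_closure_mem.
Proof.
have [C0 CD CM] := int_closure_ideal I.
split; [split|].
- exact/asboolP.
- by move=> x y /asboolP Cx /asboolP Cy; apply/asboolP; auto.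
- by move=> r x /asboolP Cx; apply/asboolP; apply: CM.
Qed.

Definition int_closure_lmod := {x : R^o | x \in int_closure_mem}.
HB.instance Definition _ := [isSub for (@proj1_sig _ _ : int_closure_lmod -> R^o)].
HB.instance Definition _ := [Choice of int_closure_lmod by <:].
HB.instance Definition _ :=
  GRing.SubChoice_isSubLmodule.Build _ _ _ int_closure_lmod int_closure_submod.

Lemma int_closure_hom_mem (N : lmodType R) (f : int_closure_lmod -> R) v :
  same_set I (trace N) -> is_hom f -> int_closure I (f v).
Proof.
move=> IN Hf; pose psi r := oapp f 0 (insub (r : R^o) : option int_closure_lmod).
have psi_val (w : int_closure_lmod) : psi (val w) = f w by rewrite /psi valK.
have psi_lin r x y :
    int_closure I x -> int_closure I y -> psi (r * x + y) = r * psi x + psi y.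
  move=> /asboolP Cx /asboolP Cy.
  pose X : int_closure_lmod := Sub x Cx; pose Y : int_closure_lmod := Sub y Cy.
  by rewrite -[r * x + y]/(val (r *: X + Y)) -[x]/(val X) -[y]/(val Y) !psi_val; apply: Hf.
have I_ideal : is_ideal I by apply: is_ideal_trace_ideal; exists N.
have C0 : int_closure I 0 by case: (int_closure_ideal I).
have psi0 : psi 0 = 0 by rewrite -[0]/(val (0 : int_closure_lmod)) psi_val hom0.
rewrite -psi_val; apply: (int_closure_stable (psi := psi)) => //.
- by move=> r x Cx; have := psi_lin r x 0 Cx C0; rewrite !addr0 psi0 addr0.
- apply: trace_stable IN _ => r x y Ix Iy.
  by apply: psi_lin; apply: int_closure_of_mem.
- exact: asboolW (valP v).
Qed.

End ClosureModule.

Theorem theorem6p2 (R : comNzRingType) (m : R -> Prop)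
  (HR : CM_local_ring m 1) (I : R -> Prop) (HI : is_trace_ideal I) :
  is_trace_ideal (int_closure I).
Proof.
have [C0 CD _] := int_closure_ideal I.
case: (HI) => N IN; exists (int_closure_lmod I) => x; split.
- move=> /asboolP Cx; exists [:: (Sub x Cx : int_closure_lmod I, val)].
  by rewrite big_seq1; split => // p [<-|[]] r a b.
- case=> s [Hs ->]; apply: big_In_ind => // p /Hs; exact: int_closure_hom_mem IN.
Qed.
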